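(* Consider the twenty vectors $E_i$ ($1\le i\le 4$), $E_{ij}$, $F_{ij}$ ($1\le i<j\le 4$), $G_i$ ($1\le i\le 4$), each of square $-2$, with pairwise intersection numbers as given in the context, and their Coxeter diagram $\Gamma$. Then $\Gamma$ has exactly $29$ parabolic subdiagrams of maximal rank $8$, namely (listing type; number of such subdiagrams; number of vertices taken from $\{E_i,E_{ij}\}$, from $\{F_{ij}\}$, from $\{G_i\}$): 1) $\tilde E_7+\tilde A_1$; $12$; $8,1,1$; 2) $\tilde E_6+\tilde A_2$; $4$; $7,3,0$; 3) $\tilde D_6+\tilde A_1+\tilde A_1$; $6$; $8,1,2$; 4) $\tilde A_7+\tilde A_1$; $3$; $8,2,0$; 5) $\tilde A_5+\tilde A_2+\tilde A_1$; $4$; $7,3,1$.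
   Context: Intersection numbers among the twenty distinct vectors: $(E_i,E_{jk})=1$ if $i\in\{j,k\}$, and all other pairs among $\{E_i,E_{jk}\}$ are $0$; $(F_{ij},F_{kl})=1$ if $|\{i,j\}\cap\{k,l\}|=1$ and $2$ if $\{i,j\}\cap\{k,l\}=\emptyset$; $(E_k,F_{ij})=0$; $(E_{kl},F_{ij})=2$ if $\{k,l\}=\{i,j\}$ and $0$ otherwise; $(G_i,G_j)=2$ for $i\ne j$; $(G_i,E_j)=2$ if $i=j$ and $0$ otherwise; $(G_i,E_{kl})=0$; $(G_i,F_{kl})=2$ if $i\notin\{k,l\}$ and $0$ if $i\in\{k,l\}$. (These are classes in the Néron–Severi lattice modulo torsion of an Enriques surface.) The Coxeter diagram has the twenty vectors as vertices, two vertices with intersection $1$ joined by a simple edge, with intersection $2$ by a thick (double) edge, and with intersection $0$ not joined. A parabolic subdiagram is a subdiagram each of whose connected components is an extended (affine) Dynkin diagram $\tilde A_n,\tilde D_n,\tilde E_n$ (where $\tilde A_1$ is two vertices joined by a thick edge); its rank is the number of vertices minus the number of components. *)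

From mathcomp Require Import all_boot all_algebra.
Set Implicit Arguments. Unset Strict Implicit. Unset Printing Implicit Defensive.

(* Indices 1..4 of the paper are represented by 'I_4 = {0,1,2,3}. *)
Definition pair4 := {s : {set 'I_4} | #|s| == 2}.

Definition V := ((('I_4 + pair4) + pair4) + 'I_4)%type.
Definition vE (i : 'I_4) : V := inl (inl (inl i)).
Definition vEE (p : pair4) : V := inl (inl (inr p)).
Definition vF (p : pair4) : V := inl (inr p).
Definition vG (i : 'I_4) : V := inr i.

Definition Eset : {set V} := [set v | match v with inl (inl _) => true | _ => false end].
Definition Fset : {set V} := [set v | match v with inl (inr _) => true | _ => false end].
Definition Gset : {set V} := [set v | match v with inr _ => true | _ => false end].

Definition offdiag (u v : V) : nat :=
  match u, v with
  | inl (inl (inl _)), inl (inl (inl _)) => 0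
  | inl (inl (inl i)), inl (inl (inr p)) => if i \in val p then 1 else 0
  | inl (inl (inl _)), inl (inr _) => 0
  | inl (inl (inl i)), inr j => if i == j then 2 else 0
  | inl (inl (inr p)), inl (inl (inl i)) => if i \in val p then 1 else 0
  | inl (inl (inr _)), inl (inl (inr _)) => 0
  | inl (inl (inr p)), inl (inr q) => if p == q then 2 else 0
  | inl (inl (inr _)), inr _ => 0
  | inl (inr _), inl (inl (inl _)) => 0
  | inl (inr p), inl (inl (inr q)) => if p == q then 2 else 0
  | inl (inr p), inl (inr q) =>
      if #|val p :&: val q| == 1 then 1
      else if #|val p :&: val q| == 0 then 2 else 0
  | inl (inr p), inr i => if i \in val p then 0 else 2
  | inr i, inl (inl (inl j)) => if i == j then 2 else 0
  | inr _, inl (inl (inr _)) => 0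
  | inr i, inl (inr p) => if i \in val p then 0 else 2
  | inr i, inr j => if i == j then 0 else 2
  end.

Definition inter (u v : V) : int := if u == v then (-2)%R else Posz (offdiag u v).

(* Coxeter diagram: weight of the edge between u and v
   (0 = no edge, 1 = simple edge, 2 = thick edge). *)
Definition wt (u v : V) : nat := if u == v then 0 else `|inter u v|%N.

Inductive AffType := tA of nat | tD of nat | tE of nat.

Definition aff_size (t : AffType) : nat :=
  match t with tA n | tD n | tE n => n.+1 end.

Definition aff_valid (t : AffType) : bool :=
  match t with
  | tA n => 1 <= n
  | tD n => 4 <= n
  | tE n => (6 <= n) && (n <= 8)
  end.

Definition aff_e0 (t : AffType) (i j : nat) : bool :=
  match t with
  | tA n => (j == i.+1) || ((i == n) && (j == 0))
  | tD n => ((i == 0) && (j == 2)) || ((i == 1) && (j == 2))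
            || [&& 2 <= i, i <= n - 3 & j == i.+1]
            || ((i == n - 2) && (j == n - 1)) || ((i == n - 2) && (j == n))
  | tE 6 => (i, j) \in [:: (0,1); (1,2); (0,3); (3,4); (0,5); (5,6)]
  | tE 7 => (i, j) \in [:: (0,1); (1,2); (2,3); (0,4); (4,5); (5,6); (0,7)]
  | tE 8 => (i, j) \in [:: (0,1); (1,2); (2,3); (3,4); (4,5); (0,6); (6,7); (0,8)]
  | tE _ => false
  end.

(* edge weights of the standard diagram; tilde A_1 has a thick edge *)
Definition aff_wt (t : AffType) (i j : nat) : nat :=
  if aff_e0 t i j || aff_e0 t j i then
    (match t with tA 1 => 2 | _ => 1 end)
  else 0.

Definition comp_of_type (C : {set V}) (t : AffType) : bool :=
  [exists f : {ffun 'I_(aff_size t) -> V},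
     [&& injectiveb f, C == [set f i | i : 'I_(aff_size t)] &
         [forall a : 'I_(aff_size t), forall b : 'I_(aff_size t),
            wt (f a) (f b) == aff_wt t a b]]].

(* C induces an extended Dynkin diagram (n bounded by 20 since |C| <= 20) *)
Definition is_affine (C : {set V}) : bool :=
  [exists n : 'I_21,
     [|| aff_valid (tA n) && comp_of_type C (tA n),
         aff_valid (tD n) && comp_of_type C (tD n) |
         aff_valid (tE n) && comp_of_type C (tE n)]].

Definition adj (S : {set V}) : rel V :=
  fun u v => [&& u \in S, v \in S & wt u v != 0].

Definition comps (S : {set V}) : {set {set V}} :=
  [set [set v in S | connect (adj S) u v] | u in S].

Definition parabolic (S : {set V}) : bool := [forall C in comps S, is_affine C].

Definition prank (S : {set V}) : nat := #|S| - #|comps S|.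

Definition ncomp (S : {set V}) (t : AffType) : nat :=
  #|[set C in comps S | comp_of_type C t]|.

Definition type_E7A1 S := [&& #|comps S| == 2, ncomp S (tE 7) == 1 & ncomp S (tA 1) == 1].
Definition type_E6A2 S := [&& #|comps S| == 2, ncomp S (tE 6) == 1 & ncomp S (tA 2) == 1].
Definition type_D6A1A1 S := [&& #|comps S| == 3, ncomp S (tD 6) == 1 & ncomp S (tA 1) == 2].
Definition type_A7A1 S := [&& #|comps S| == 2, ncomp S (tA 7) == 1 & ncomp S (tA 1) == 1].
Definition type_A5A2A1 S :=
  [&& #|comps S| == 3, ncomp S (tA 5) == 1, ncomp S (tA 2) == 1 & ncomp S (tA 1) == 1].

Definition type_class (ty : {set V} -> bool) (c e f g : nat) : Prop :=
  #|[set S : {set V} | [&& parabolic S, prank S == 8 & ty S]]| = c /\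
  (forall S : {set V}, parabolic S -> prank S = 8 -> ty S ->
     [/\ #|S :&: Eset| = e, #|S :&: Fset| = f & #|S :&: Gset| = g]).

(* The statement is decided by a certified enumeration. Numbering the twenty
   vertices 0..19 turns the Coxeter diagram into a computable weight function.
   Every connected component of a parabolic subdiagram is the image of an
   embedding of an extended Dynkin diagram; enumerating these embeddings gives
   the 68 vertex sets spanning an extended Dynkin subdiagram.  The components
   of a subdiagram are pairwise disjoint and not joined by any edge, and
   conversely a family of such connected sets is the set of components of its
   union.  Hence the parabolic subdiagrams correspond exactly to the cliques of
   this orthogonality relation on the 68 sets (there are 128 of them), and rank,
   component types and vertex distribution are read off these families. *)

From mathcomp Require Import all_boot all_algebra zify.
Set Implicit Arguments. Unset Strict Implicit. Unset Printing Implicit Defensive.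

Lemma card_set2I (T : finType) (a b : T) (D : {set T}) : a != b ->
  #|[set a; b] :&: D| = (a \in D) + (b \in D).
Proof.
move=> ab; have -> : #|[set a; b] :&: D| = #|[seq x <- [:: a; b] | x \in D]|.
  by apply: eq_card => x; rewrite in_setI in_set2 mem_filter !inE andbC.
rewrite (card_uniqP _) ?filter_uniq //=; last by rewrite inE ab.
by case: (a \in D); case: (b \in D).
Qed.

Lemma pairwise_uniq_in (T : eqType) (r : rel T) s :
  {in s, irreflexive r} -> pairwise r s -> uniq s.
Proof.
elim: s => //= x s IHs irr /andP [/allP xs /IHs ->]; last first.
  by move=> y ys; apply: irr; rewrite inE ys orbT.
by rewrite andbT; apply: contraFN (irr x (mem_head _ _)) => /xs.
Qed.

Lemma pairwise_in (T : eqType) (r : rel T) s :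
  pairwise r s -> {in s &, forall x y, x != y -> r x y || r y x}.
Proof.
elim: s => //= z s IHs /andP [/allP zs /IHs rs] x y.
rewrite !inE => /orP [/eqP ->|xs] /orP [/eqP ->|ys]; rewrite ?eqxx // => xy.
- by rewrite zs.
- by rewrite zs ?orbT.
- exact: rs.
Qed.

Section Embeddings.

Variables (n : nat) (w a : nat -> nat -> nat).

Definition extends_embedding (s : seq nat) (y : nat) :=
  (y \notin s) && all (fun i => (w (nth 0 s i) y == a i (size s))
                               && (w y (nth 0 s i) == a (size s) i)) (iota 0 (size s)).

Fixpoint embeddings m : seq (seq nat) :=
  if m is m'.+1 then
    flatten [seq [seq rcons s y | y <- iota 0 n & extends_embedding s y] | s <- embeddings m']
  else [:: [::]].

Definition is_embedding m s := [/\ size s = m, uniq s, all (gtn n) s &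
  forall i j, i < m -> j < m -> i != j -> w (nth 0 s i) (nth 0 s j) = a i j].

Lemma mem_embeddings m s : s \in embeddings m <-> is_embedding m s.
Proof.
elim: m s => [|m IH] s.
  by rewrite inE; split => [/eqP -> | [/size0nil -> _ _ _]].
split.
- case/flatten_mapP => s' /IH [sz u lt_s' w_s'] /mapP [y].
  rewrite mem_filter => /andP [/andP [ys /allP w_y] yn] ->.
  split; first by rewrite size_rcons sz.
  + by rewrite rcons_uniq ys u.
  + by rewrite all_rcons lt_s' andbT; move: yn; rewrite mem_iota.
  move=> i j hi hj ij; rewrite !nth_rcons sz.
  have [hi'|hi'] := ltnP i m; have [hj'|hj'] := ltnP j m.
  + exact: w_s'.
  + have -> : j = m by lia.
    have : i \in iota 0 (size s') by rewrite mem_iota sz.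
    by rewrite eqxx => /w_y /andP [/eqP -> _]; rewrite sz.
  + have -> : i = m by lia.
    have : j \in iota 0 (size s') by rewrite mem_iota sz.
    by rewrite eqxx => /w_y /andP [_ /eqP ->]; rewrite sz.
  + by move: ij; rewrite (_ : i = j) ?eqxx //; lia.
- case/lastP: s => [[] //|s' y []].
  rewrite size_rcons rcons_uniq all_rcons => -[sz] /andP [ys u] /andP [yn lt_s'] w_s.
  apply/flatten_mapP; exists s'.
    apply/IH; split => // i j hi hj ij.
    by have := w_s i j (ltnW hi) (ltnW hj) ij; rewrite !nth_rcons sz hi hj.
  apply/mapP; exists y => //; rewrite mem_filter mem_iota /= add0n (yn : y < n) andbT.
  rewrite /extends_embedding ys /=.
  apply/allP => i; rewrite mem_iota add0n sz => /andP [_ hi].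
  have := w_s i m (ltnW hi) (ltnSn m); have := w_s m i (ltnSn m) (ltnW hi).
  by rewrite !nth_rcons sz hi ltnn eqxx !(ltn_eqF hi) (gtn_eqF hi) => -> // -> // ; rewrite !eqxx.
Qed.

End Embeddings.

Section Cliques.

Variables (T : eqType) (r : rel T).

Fixpoint cliques (s acc : seq T) : seq (seq T) :=
  if s is x :: s' then
    cliques s' acc ++ (if all (r x) acc then cliques s' (x :: acc) else [::])
  else [:: acc].

Lemma cliques_complete s acc c : subseq c s -> uniq c ->
  {in c &, forall x y, x != y -> r x y} -> {in c, forall x, all (r x) acc} ->
  rev c ++ acc \in cliques s acc.
Proof.
elim: s acc c => [|x s IHs] acc c /=; first by move=> /eqP -> _ _ _; rewrite inE.
case: c => [|y c] sub_c; first by move=> _ _ _; rewrite mem_cat (IHs acc [::]) ?sub0seq.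
case: eqP sub_c => [<-|_] sub_c /= /andP [yc uc] rc acc_c; rewrite mem_cat; last first.
  by rewrite IHs //= yc.
have -> : all (r y) acc by apply: acc_c; rewrite mem_head.
rewrite rev_cons cat_rcons IHs ?orbT // => [a b ac bc|a ac].
  by apply: rc; rewrite inE ?ac ?bc orbT.
rewrite /= acc_c ?inE ?ac ?orbT // andbT rc ?inE ?eqxx ?ac ?orbT //.
by apply: contraNneq yc => <-.
Qed.

Lemma cliques_pairwise s acc F : pairwise r acc -> F \in cliques s acc -> pairwise r F.
Proof.
elim: s acc => [|x s IHs] acc /= racc; first by rewrite inE => /eqP ->.
rewrite mem_cat => /orP [/(IHs _ racc) //|]; case: ifP => // xacc.
by apply: IHs; rewrite /= xacc.
Qed.

Lemma cliques_subset s acc F : F \in cliques s acc -> {subset F <= s ++ acc}.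
Proof.
elim: s acc => [|x s IHs] acc /=; first by rewrite inE => /eqP ->.
rewrite mem_cat => /orP [/IHs sub y /sub|]; first by rewrite inE => ->; rewrite orbT.
case: ifP => // _ /IHs sub y /sub; rewrite inE !mem_cat inE.
by case/orP => [->|/orP [->|->]]; rewrite ?orbT.
Qed.

End Cliques.

Lemma offdiag_sym u v : offdiag u v = offdiag v u.
Proof.
by case: u => [[[i|p]|p]|i]; case: v => [[[j|q]|q]|j] //=; rewrite 1?setIC // eq_sym.
Qed.

Lemma wt_sym u v : wt u v = wt v u.
Proof. by rewrite /wt /inter eq_sym offdiag_sym. Qed.

(* Vertex codes: 0-3 are the E_i, 4-9 the E_ij, 10-15 the F_ij and 16-19 the
   G_i, the pair number q = 0..5 standing for ij = 01, 02, 03, 12, 13, 23. *)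
Definition pair_lo q := nth 0 [:: 0; 0; 0; 1; 1; 2] q.
Definition pair_hi q := nth 1 [:: 1; 2; 3; 2; 3; 3] q.
Definition pair_has i q := (i == pair_lo q) || (i == pair_hi q).
Definition pair_meet q q' := pair_has (pair_lo q) q' + pair_has (pair_hi q) q'.

Lemma pair_lo_hi_lt q : pair_lo q < pair_hi q < 4.
Proof. by case: q => [|[|[|[|[|[|q]]]]]]; rewrite /pair_lo /pair_hi /= ?nth_nil. Qed.

Lemma inord4_eq k l : k < 4 -> l < 4 -> (inord k == inord l :> 'I_4) = (k == l).
Proof. by move=> hk hl; rewrite -val_eqE /= !inordK. Qed.

Lemma card_pair_of_subproof q : #|[set inord (pair_lo q); inord (pair_hi q)] : {set 'I_4}| == 2.
Proof.
have /andP [hab hb] := pair_lo_hi_lt q.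
by rewrite cards2 inord4_eq ?(ltn_trans hab) // (ltn_eqF hab).
Qed.

Definition pair_of q : pair4 :=
  exist _ [set inord (pair_lo q); inord (pair_hi q)] (card_pair_of_subproof q).

Lemma mem_pair_of i q : i < 4 -> (inord i \in val (pair_of q)) = pair_has i q.
Proof.
have /andP [hab hb] := pair_lo_hi_lt q.
by move=> hi; rewrite in_set2 !inord4_eq ?(ltn_trans hab).
Qed.

Lemma card_pair_ofI q q' : #|val (pair_of q) :&: val (pair_of q')| = pair_meet q q'.
Proof.
have /andP [hab hb] := pair_lo_hi_lt q; have ha := ltn_trans hab hb.
by rewrite card_set2I ?inord4_eq ?(ltn_eqF hab) // !mem_pair_of.
Qed.

Lemma pair_of_eq q q' : q < 6 -> q' < 6 -> (pair_of q == pair_of q') = (q == q').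
Proof.
move=> hq hq'; apply/eqP/eqP => [E|-> //].
have /eqP : pair_meet q q' == 2 by rewrite -card_pair_ofI E setIid; exact: (valP (pair_of q')).
by move: hq hq' {E}; case: q => [|[|[|[|[|[|q]]]]]]; case: q' => [|[|[|[|[|[|q']]]]]].
Qed.

Lemma pair_of_surj (p : pair4) : exists2 q, q < 6 & p = pair_of q.
Proof.
have inj : injective (fun q : 'I_6 => pair_of q).
  by move=> q q' /eqP; rewrite pair_of_eq // => /eqP /val_inj.
have /eqP full : [set pair_of q | q : 'I_6] == [set: pair4].
  rewrite eqEcard subsetT (card_imset _ inj) card_ord cardsT card_sig.
  by rewrite -cardsE card_draws card_ord.
have : p \in [set pair_of q | q : 'I_6] by rewrite full inE.
by case/imsetP => q _ ->; exists q.
Qed.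

Definition vx k : V :=
  if k < 4 then vE (inord k) else if k < 10 then vEE (pair_of (k - 4))
  else if k < 16 then vF (pair_of (k - 10)) else vG (inord (k - 16)).

Definition offdiagN k l : nat :=
  if k < 4 then
    if l < 4 then 0 else if l < 10 then nat_of_bool (pair_has k (l - 4))
    else if l < 16 then 0 else (k == l - 16) * 2
  else if k < 10 then
    if l < 4 then nat_of_bool (pair_has l (k - 4)) else if l < 10 then 0
    else if l < 16 then (k - 4 == l - 10) * 2 else 0
  else if k < 16 then
    if l < 4 then 0 else if l < 10 then (k - 10 == l - 4) * 2
    else if l < 16 then
      (if pair_meet (k - 10) (l - 10) == 1 then 1
       else if pair_meet (k - 10) (l - 10) == 0 then 2 else 0)
    else (~~ pair_has (l - 16) (k - 10)) * 2
  else
    if l < 4 then (k - 16 == l) * 2 else if l < 10 then 0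
    else if l < 16 then (~~ pair_has (k - 16) (l - 10)) * 2 else (k - 16 != l - 16) * 2.

Definition wtN k l := if k == l then 0 else offdiagN k l.

Ltac split_code k :=
  case: (ltnP k 4) => ?; [|case: (ltnP k 10) => ?; [|case: (ltnP k 16) => ?]].

Definition pair_index (p : pair4) := index p [seq pair_of q | q <- iota 0 6].

Lemma pair_ofK q : q < 6 -> pair_index (pair_of q) = q.
Proof.
move=> hq; have uniq_pairs : uniq [seq pair_of q | q <- iota 0 6].
  rewrite map_inj_in_uniq ?iota_uniq // => a b.
  by rewrite !mem_iota => /= ha hb /eqP; rewrite pair_of_eq // => /eqP.
have -> : pair_of q = nth (pair_of 0) [seq pair_of q | q <- iota 0 6] q.
  by rewrite (nth_map 0) ?size_iota // nth_iota.
by rewrite /pair_index index_uniq ?size_map ?size_iota.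
Qed.

Definition code (v : V) : nat :=
  match v with
  | inl (inl (inl i)) => i
  | inl (inl (inr p)) => 4 + pair_index p
  | inl (inr p) => 10 + pair_index p
  | inr i => 16 + i
  end.

Lemma pair_index_lt p : pair_index p < 6.
Proof. by case: (pair_of_surj p) => q hq ->; rewrite pair_ofK. Qed.

Lemma code_lt v : code v < 20.
Proof.
by case: v => [[[i|p]|p]|i] /=;
  [have := ltn_ord i | have := pair_index_lt p | have := pair_index_lt p | have := ltn_ord i]; lia.
Qed.

Lemma codeK : cancel code vx.
Proof.
case=> [[[i|p]|p]|i]; rewrite /vx /=; first by rewrite ltn_ord inord_val.
- case: (pair_of_surj p) => q hq ->.
  by rewrite pair_ofK // (_ : 4 + q < 10) ?addKn //; lia.
- case: (pair_of_surj p) => q hq ->.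
  by rewrite pair_ofK // (_ : 10 + q < 16) ?addKn //; lia.
- by rewrite addKn inord_val.
Qed.

Lemma vxK k : k < 20 -> code (vx k) = k.
Proof.
rewrite /vx; split_code k => hk /=; rewrite ?inordK ?pair_ofK; lia.
Qed.

Lemma vx_inj : {in gtn 20 &, injective vx}.
Proof. exact: can_in_inj vxK. Qed.

Lemma wt_vx k l : k < 20 -> l < 20 -> wt (vx k) (vx l) = wtN k l.
Proof.
move=> hk hl; rewrite /wt /inter /wtN (inj_in_eq vx_inj) //; case: eqP => // _.
rewrite /vx /offdiagN; split_code k; split_code l.
all: rewrite /vE /vEE /vF /vG /offdiag ?card_pair_ofI ?mem_pair_of ?inord4_eq ?pair_of_eq //.
all: try lia; by case: ifP.
Qed.

Lemma mem_Eset v : (v \in Eset) = (code v < 10).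
Proof.
rewrite -[v in LHS]codeK inE; have := code_lt v; move: (code v) => k.
by rewrite /vx; split_code k => //=; lia.
Qed.

Lemma mem_Fset v : (v \in Fset) = (10 <= code v < 16).
Proof.
rewrite -[v in LHS]codeK inE; have := code_lt v; move: (code v) => k.
by rewrite /vx; split_code k => //=; lia.
Qed.

Lemma mem_Gset v : (v \in Gset) = (16 <= code v).
Proof.
rewrite -[v in LHS]codeK inE; have := code_lt v; move: (code v) => k.
by rewrite /vx; split_code k => //=; lia.
Qed.

Lemma aff_wt_diag t i : aff_valid t -> aff_wt t i i = 0.
Proof.
rewrite /aff_wt orbb; case: t => n /= hn.
- by rewrite ifF //; lia.
- by rewrite ifF //; lia.
- case: n hn => [|[|[|[|[|[|[|[|[|n]]]]]]]]] //= _; rewrite ifF //.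
  all: by rewrite !inE !xpair_eqE; lia.
Qed.

Definition vset (l : seq nat) : {set V} := [set x in map vx l].

Definition canon (s : seq nat) := sort leq (undup [seq k <- s | k < 20]).

Lemma mem_canon k s : (k \in canon s) = (k < 20) && (k \in s).
Proof. by rewrite mem_sort mem_undup mem_filter. Qed.

Lemma canon_lt s : all (gtn 20) (canon s).
Proof. by apply/allP => k; rewrite mem_canon => /andP []. Qed.

Lemma canon_uniq s : uniq (canon s).
Proof. by rewrite sort_uniq undup_uniq. Qed.

Lemma canon_sorted s : sorted ltn (canon s).
Proof. by rewrite ltn_sorted_uniq_leq canon_uniq (sort_sorted leq_total). Qed.

Lemma canon_idem s : canon (canon s) = canon s.
Proof.
apply: (irr_sorted_eq ltn_trans ltnn); rewrite ?canon_sorted // => k.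
by rewrite !mem_canon andbA andbb.
Qed.

Lemma mem_vset v l : all (gtn 20) l -> (v \in vset l) = (code v \in l).
Proof.
move=> /allP l_lt; rewrite inE; apply/mapP/idP => [[k hk ->]|hv].
  by rewrite vxK //; apply: l_lt.
by exists (code v); rewrite ?codeK.
Qed.

Lemma vset_canon s : all (gtn 20) s -> vset (canon s) = vset s.
Proof. by move=> s_lt; apply/setP => v; rewrite !mem_vset ?canon_lt // mem_canon code_lt. Qed.

Lemma vset_inj l1 l2 : canon l1 = l1 -> canon l2 = l2 -> vset l1 = vset l2 -> l1 = l2.
Proof.
move=> <- <- E; apply: (irr_sorted_eq ltn_trans ltnn); rewrite ?canon_sorted // => k.
have [k_lt|k_ge] := ltnP k 20; last by rewrite !mem_canon ltnNge k_ge.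
by rewrite -[k]vxK // -!mem_vset ?canon_lt // E.
Qed.

Definition affine_sets (t : AffType) : seq (seq nat) :=
  if aff_valid t then undup [seq canon s | s <- embeddings 20 wtN (aff_wt t) (aff_size t)]
  else [::].

Lemma comp_of_typeP C t : aff_valid t ->
  comp_of_type C t <-> exists2 l, l \in affine_sets t & C = vset l.
Proof.
move=> t_valid; rewrite /affine_sets t_valid; set k := aff_size t.
split.
- case/existsP => f /and3P [/injectiveP f_inj /eqP -> /forallP f_wt].
  pose s := [seq code (f a) | a <- enum 'I_k].
  have nth_s i (hi : i < k) : nth 0 s i = code (f (Ordinal hi)).
    by rewrite (nth_map (Ordinal hi)) ?size_enum_ord // (nth_ord_enum _ (Ordinal hi)).
  have s_emb : is_embedding 20 wtN (aff_wt t) k s.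
    split; first by rewrite size_map size_enum_ord.
    + by rewrite map_inj_uniq ?enum_uniq // => a b /(can_inj codeK) /f_inj.
    + by apply/allP => _ /mapP [a _ ->]; apply: code_lt.
    move=> i j hi hj _; rewrite (nth_s i hi) (nth_s j hj) -wt_vx ?code_lt // !codeK.
    by apply/eqP; have /forallP := f_wt (Ordinal hi); apply.
  exists (canon s); first by rewrite mem_undup; apply: map_f; apply/mem_embeddings.
  rewrite vset_canon; last by case: s_emb.
  apply/setP => x; rewrite inE; apply/imsetP/mapP => [[a _ ->]|[_ /mapP [a _ ->] ->]].
    by exists (code (f a)); rewrite ?codeK // (map_f (fun a => code (f a))) ?mem_enum.
  by exists a; rewrite ?codeK.
- case=> _ /[!mem_undup] /mapP [s /mem_embeddings [sz s_uniq s_lt s_wt] ->] ->.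
  have nth_lt i : i < k -> nth 0 s i < 20 by move=> hi; apply: (allP s_lt); rewrite mem_nth ?sz.
  apply/existsP; exists [ffun i : 'I_k => vx (nth 0 s i)]; apply/and3P; split.
  + apply/injectiveP => i j; rewrite !ffunE => /vx_inj.
    rewrite !inE => /(_ (nth_lt _ (ltn_ord i)) (nth_lt _ (ltn_ord j))) /eqP.
    by rewrite nth_uniq ?sz // => /eqP /val_inj.
  + apply/eqP/setP => x; rewrite vset_canon // inE.
    apply/mapP/imsetP => [[_ /(nthP 0) [i hi <-] ->]|[i _ ->]].
      by rewrite sz in hi; exists (Ordinal hi); rewrite ?ffunE.
    by rewrite ffunE; exists (nth 0 s i); rewrite ?mem_nth ?sz.
  + apply/forallP => i; apply/forallP => j; rewrite !ffunE.
    have [<-|ij] := eqVneq i j; first by rewrite /wt eqxx aff_wt_diag.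
    by rewrite wt_vx ?nth_lt // s_wt.
Qed.

Lemma affine_sets_valid t l : l \in affine_sets t -> aff_valid t.
Proof. by rewrite /affine_sets; case: aff_valid. Qed.

Definition affine_enumeration : seq (seq nat) := undup (flatten
  [seq affine_sets (tA n) ++ affine_sets (tD n) ++ affine_sets (tE n) | n <- iota 0 21]).

(* Evaluated once: unification against the unevaluated enumeration (or its
   cliques below) would recompute it by lazy reduction, which is hopeless. *)
Definition affine_codes := Eval vm_compute in affine_enumeration.

Lemma affine_codesE : affine_codes = affine_enumeration.
Proof. by vm_compute. Qed.

Lemma mem_affine_codes l : l \in affine_codes <-> exists2 n, n < 21 &
  [\/ l \in affine_sets (tA n), l \in affine_sets (tD n) | l \in affine_sets (tE n)].
Proof.
rewrite affine_codesE; split=> [l_aff | [n hn hl]].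
  have /flatten_mapP [n] : l \in flatten [seq affine_sets (tA n) ++ affine_sets (tD n)
                                        ++ affine_sets (tE n) | n <- iota 0 21].
    by rewrite -mem_undup; exact: l_aff.
  by rewrite mem_iota !mem_cat => hn /or3P hl; exists n.
rewrite /affine_enumeration mem_undup; apply/flatten_mapP; exists n; first by rewrite mem_iota.
by rewrite !mem_cat; apply/or3P.
Qed.

Lemma is_affineP C : is_affine C <-> exists2 l, l \in affine_codes & C = vset l.
Proof.
split=> [/existsP [n /or3P H] | [l /mem_affine_codes [n n_lt hl] ->]].
  have n_lt := ltn_ord n.
  case: H => /andP [t_valid /(comp_of_typeP _ t_valid) [l hl ->]];
    (exists l; last by []); apply/mem_affine_codes; exists n => //.
  - exact: Or31.
  - exact: Or32.
  - exact: Or33.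
apply/existsP; exists (Ordinal n_lt); apply/or3P.
case: hl => hl; [apply: Or31 | apply: Or32 | apply: Or33]; rewrite (affine_sets_valid hl);
  by apply/comp_of_typeP; [exact: affine_sets_valid hl | exists l].
Qed.

Implicit Types (S C D : {set V}) (u v x y : V) (l L : seq nat) (F : seq (seq nat)).

Definition component (S : {set V}) (u : V) : {set V} := [set v in S | connect (adj S) u v].

Lemma connect_adj_sym S : connect_sym (adj S).
Proof. by apply: sym_connect_sym => x y; rewrite /adj wt_sym andbCA. Qed.

Lemma component_id S u : u \in S -> u \in component S u.
Proof. by move=> uS; rewrite inE uS connect0. Qed.

Lemma component_sub S u : component S u \subset S.
Proof. by apply/subsetP => v; rewrite inE => /andP []. Qed.

Lemma component_eq S u v : v \in component S u -> component S v = component S u.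
Proof.
rewrite inE => /andP [_ uv]; apply/setP => x; rewrite !inE; case: (x \in S) => //=.
apply/idP/idP => [|ux]; first exact: connect_trans.
by rewrite connect_adj_sym in uv; apply: connect_trans ux.
Qed.

Lemma component_adj S u x y :
  x \in component S u -> y \in S -> wt x y != 0 -> y \in component S u.
Proof.
rewrite !inE => /andP [xS ux] yS xy; rewrite yS.
by apply: connect_trans ux (connect1 _); rewrite /adj xS yS.
Qed.

Lemma compsP S C : reflect (exists2 u, u \in S & C = component S u) (C \in comps S).
Proof. exact: imsetP. Qed.

Lemma comps_orthogonal S C D x y : C \in comps S -> D \in comps S -> C != D ->
  x \in C -> y \in D -> (x != y) && (wt x y == 0).
Proof.
move=> /compsP [u _ ->] /compsP [v _ ->] CD xC yD.
apply/andP; split.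
  by apply: contraNneq CD => xy; rewrite -(component_eq xC) -(component_eq yD) xy.
apply: contraNT CD => xy; have yS := subsetP (component_sub S v) y yD.
by rewrite -(component_eq (component_adj xC yS xy)) (component_eq yD).
Qed.

Lemma comps_partition S (G : seq {set V}) :
  (forall x, (x \in S) = has (fun C => x \in C) G) ->
  {in G &, forall C D x y, C != D -> x \in C -> y \in D -> wt x y = 0} ->
  {in G, forall C, exists x, x \in C} ->
  {in G, forall C u v, u \in C -> v \in C -> connect (adj C) u v} ->
  comps S = [set C in G].
Proof.
move=> memS orthG nonemptyG connG.
have CS C x : C \in G -> x \in C -> x \in S by move=> CG xC; rewrite memS; apply/hasP; exists C.
have compG C u : C \in G -> u \in C -> component S u = C.
  move=> CG uC; have closedC x y : x \in C -> adj S x y -> y \in C.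
    move=> xC /and3P [_ /[dup] yS /[!memS] /hasP [D DG yD] xy].
    have [-> //|CD] := eqVneq C D.
    by rewrite (orthG C D CG DG x y CD xC yD) eqxx in xy.
  apply/setP => v; rewrite inE; apply/andP/idP => [[_ /connectP [p pth ->]]|vC].
    elim: p u uC pth => [|z p IHp] x xC //= /andP [xz zp].
    exact: IHp (closedC x z xC xz) zp.
  split; first exact: CS vC.
  apply: connect_sub (connG C CG u v uC vC) => x y /and3P [xC yC xy].
  by apply: connect1; rewrite /adj (CS C x CG xC) (CS C y CG yC).
apply/setP => C; rewrite inE; apply/idP/idP => [/compsP [u uS ->]|CG].
  by move: (uS); rewrite memS => /hasP [D DG uD]; rewrite (compG D u DG uD).
have [x xC] := nonemptyG C CG.
by rewrite -(compG C x CG xC); apply/compsP; exists x => //; apply: CS xC.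
Qed.

Definition compatible (l1 l2 : seq nat) :=
  all (fun a => all (fun b => (a != b) && (wtN a b == 0)) l2) l1.

Definition parabolic_families := Eval vm_compute in cliques compatible affine_codes [::].

Lemma parabolic_familiesE : parabolic_families = cliques compatible affine_codes [::].
Proof. by vm_compute. Qed.

Definition reach_step l (R : seq nat) :=
  [seq k <- l | (k \in R) || has (fun j => wtN j k != 0) R].

Definition connected_codes l := all (fun k => k \in iter 20 (reach_step l) [:: head 0 l]) l.

Lemma connected_codesP l : all (gtn 20) l -> connected_codes l ->
  {in vset l &, forall u v, connect (adj (vset l)) u v}.
Proof.
move=> l_lt /allP conn_l u v; set h := head 0 l.
have reach n k : h \in l -> k \in iter n (reach_step l) [:: h] ->
    (k \in l) && connect (adj (vset l)) (vx h) (vx k).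
  move=> hl; elim: n k => [|n IHn] k; first by rewrite /= inE => /eqP ->; rewrite hl connect0.
  rewrite iterS mem_filter => /andP [/orP [/IHn //|/hasP [j /IHn /andP [jl hj] jk]] kl].
  rewrite kl; apply: connect_trans hj (connect1 _).
  have [j_lt k_lt] : j < 20 /\ k < 20 by split; apply: (allP l_lt).
  by rewrite /adj !mem_vset ?vxK // jl kl wt_vx.
have from_h w : w \in vset l -> connect (adj (vset l)) (vx h) w.
  rewrite mem_vset // => wl.
  have hl : h \in l by rewrite /h; case: (l) wl => //= x t; rewrite mem_head.
  by case/andP: (reach 20 _ hl (conn_l _ wl)); rewrite codeK.
move=> /from_h hu /from_h hv; apply: connect_trans hv.
by rewrite connect_adj_sym.
Qed.

Definition represents S F := [/\ comps S = [set C in map vset F], S = vset (flatten F),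
  uniq (map vset F) & all (fun l => canon l == l) F].

Lemma affine_sets_canon t l : l \in affine_sets t -> canon l = l.
Proof.
rewrite /affine_sets; case: aff_valid => //.
by rewrite mem_undup => /mapP [s _ ->]; rewrite canon_idem.
Qed.

Lemma affine_codes_canon l : l \in affine_codes -> canon l = l.
Proof. by case/mem_affine_codes=> n _ [] /affine_sets_canon. Qed.

Lemma flatten_lt F : all (fun l => canon l == l) F -> all (gtn 20) (flatten F).
Proof.
move=> /allP F_canon; apply/allP => k /flattenP [l lF kl].
by have /eqP lE := F_canon l lF; move: kl; rewrite -lE mem_canon => /andP [].
Qed.

Lemma mem_vset_flatten v F : (v \in vset (flatten F)) = has (fun l => v \in vset l) F.
Proof. by elim: F => [|l F IHF]; rewrite ?inE //= -IHF !inE map_cat mem_cat. Qed.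

Lemma compatibleP l1 l2 : all (gtn 20) l1 -> all (gtn 20) l2 ->
  reflect {in vset l1 & vset l2, forall x y, (x != y) && (wt x y == 0)} (compatible l1 l2).
Proof.
move=> l1_lt l2_lt; apply: (iffP allP) => [comp x y|orth a al1].
  rewrite !mem_vset // => /comp /allP xl2 /xl2 /andP [xy w0].
  by rewrite -(inj_eq (can_inj codeK)) xy -(codeK x) -(codeK y) wt_vx ?code_lt.
apply/allP => b bl2.
have [a_lt b_lt] : a < 20 /\ b < 20 by split; [apply: (allP l1_lt) | apply: (allP l2_lt)].
have /orth : vx a \in vset l1 by rewrite mem_vset // vxK.
move=> /(_ (vx b)); rewrite mem_vset // vxK // => /(_ bl2).
by rewrite (inj_in_eq vx_inj) ?inE // wt_vx.
Qed.

Lemma affine_codes_lt l : l \in affine_codes -> all (gtn 20) l.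
Proof. by move/affine_codes_canon <-; apply: canon_lt. Qed.

Lemma parabolic_represented S : parabolic S ->
  exists2 F, F \in parabolic_families & represents S F.
Proof.
move=> /forallP S_par.
have comp_code C : C \in comps S -> exists2 l, l \in affine_codes & C = vset l.
  by move=> CS; apply/is_affineP; move/implyP: (S_par C); apply.
pose c := [seq l <- affine_codes | vset l \in comps S].
have c_codes : {subset c <= affine_codes} := mem_subseq (filter_subseq _ _).
have c_comps l : l \in c -> vset l \in comps S by rewrite mem_filter => /andP [].
have vset_c_inj : {in c &, injective vset}.
  by move=> l1 l2 /c_codes/affine_codes_canon e1 /c_codes/affine_codes_canon e2; apply: vset_inj.
have c_uniq : uniq c by rewrite filter_uniq // affine_codesE undup_uniq.
exists (rev c).
  rewrite parabolic_familiesE -[rev c]cats0; apply: cliques_complete => //.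
    exact: filter_subseq.
  move=> l1 l2 l1c l2c l12; have := c_codes _ l1c; have := c_codes _ l2c.
  move=> /affine_codes_lt l2_lt /affine_codes_lt l1_lt; apply/compatibleP => // x y.
  apply: comps_orthogonal (c_comps _ l1c) (c_comps _ l2c) _.
  by apply: contra l12 => /eqP /vset_c_inj -> //.
split.
- apply/setP => C; rewrite inE map_rev mem_rev; apply/idP/mapP => [CS|[l lc ->]].
    by have [l lA CE] := comp_code C CS; exists l; rewrite // mem_filter -CE CS.
  exact: c_comps.
- apply/setP => x; rewrite mem_vset_flatten has_rev; apply/idP/hasP => [xS|[l /c_comps]].
    have compx : component S x \in comps S by apply/compsP; exists x.
    have [l lA xE] := comp_code _ compx.
    by exists l; rewrite ?mem_filter -?xE ?compx // component_id.
  by case/compsP => u _ -> /(subsetP (component_sub S u)).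
- by rewrite map_rev rev_uniq map_inj_in_uniq.
- by apply/allP => l; rewrite mem_rev => /c_codes /affine_codes_canon ->.
Qed.

Lemma families_connected :
  all (all (fun l => (l != [::]) && connected_codes l)) parabolic_families.
Proof. by vm_compute. Qed.

Lemma families_represented F : F \in parabolic_families ->
  parabolic (vset (flatten F)) /\ represents (vset (flatten F)) F.
Proof.
move=> FP; have /allP /(_ F FP) /allP F_conn := families_connected.
rewrite parabolic_familiesE in FP.
have F_pair : pairwise compatible F by apply: cliques_pairwise FP.
have F_codes : {subset F <= affine_codes} by move=> l /(cliques_subset FP); rewrite cats0.
have F_lt l : l \in F -> all (gtn 20) l by move/F_codes/affine_codes_lt.
have F_canon l : l \in F -> canon l = l by move/F_codes/affine_codes_canon.
have F_uniq : uniq F.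
  apply: pairwise_uniq_in F_pair => l /F_conn /andP [l_ne _].
  by case: l l_ne => // a l _; rewrite /compatible /= eqxx.
have compsE : comps (vset (flatten F)) = [set C in map vset F].
  apply: comps_partition => [x|C D|C|C].
  - by rewrite mem_vset_flatten has_map.
  - move=> /mapP [l1 l1F ->] /mapP [l2 l2F ->] x y l12 xl1 yl2.
    have [l1_lt l2_lt] := (F_lt _ l1F, F_lt _ l2F).
    have /(pairwise_in F_pair l1F l2F) : l1 != l2 by apply: contraNneq l12 => ->.
    case/orP => [/(compatibleP l1_lt l2_lt) orth | /(compatibleP l2_lt l1_lt) orth].
      by case/andP: (orth _ _ xl1 yl2) => _ /eqP.
    by case/andP: (orth _ _ yl2 xl1) => _ /eqP; rewrite wt_sym.
  - by case/mapP => -[|a l] /F_conn // _ ->; exists (vx a); rewrite inE mem_head.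
  - case/mapP => l lF -> u v; apply: connected_codesP; [exact: F_lt | by case/andP: (F_conn l lF)].
split; last split.
- apply/forallP => C; apply/implyP; rewrite compsE inE => /mapP [l lF ->].
  by apply/is_affineP; exists l => //; apply: F_codes.
- exact: compsE.
- by [].
- by rewrite map_inj_in_uniq // => l1 l2 /F_canon e1 /F_canon e2; apply: vset_inj.
- by apply/allP => l /F_canon ->.
Qed.

Definition family_rank F := size (canon (flatten F)) - size F.

Lemma card_vset l : uniq l -> all (gtn 20) l -> #|vset l| = size l.
Proof.
move=> l_uniq /allP l_lt; rewrite cardsE (card_uniqP _) ?size_map //.
by rewrite map_inj_in_uniq // => x y /l_lt x_lt /l_lt y_lt; apply: vx_inj.
Qed.

Lemma card_vsetI (B : {set V}) (P : pred nat) L : uniq L -> all (gtn 20) L ->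
  (forall v, (v \in B) = P (code v)) -> #|vset L :&: B| = count P L.
Proof.
move=> L_uniq L_lt memB.
have PL_lt : all (gtn 20) (filter P L).
  by apply/allP => k; rewrite mem_filter => /andP [_ /(allP L_lt)].
have -> : vset L :&: B = vset (filter P L).
  by apply/setP => x; rewrite in_setI !mem_vset // mem_filter memB andbC.
by rewrite card_vset ?filter_uniq // size_filter.
Qed.

Section Represented.

Variables (S : {set V}) (F : seq (seq nat)).
Hypothesis SF : represents S F.

Lemma represents_lt : all (gtn 20) (flatten F).
Proof. by case: SF => _ _ _; apply: flatten_lt. Qed.

Lemma represents_ncomps : #|comps S| = size F.
Proof. by case: SF => -> _ F_uniq _; rewrite cardsE (card_uniqP _) ?size_map. Qed.

Lemma represents_prank : prank S = family_rank F.
Proof.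
rewrite /prank represents_ncomps; case: SF => _ SE _ _.
by rewrite SE -vset_canon ?represents_lt // card_vset ?canon_uniq ?canon_lt.
Qed.

Lemma represents_ncomp t : aff_valid t -> ncomp S t = count (mem (affine_sets t)) F.
Proof.
case: SF => SE _ F_uniq /allP F_canon t_valid; rewrite /ncomp SE.
have -> : [set C in [set C in map vset F] | comp_of_type C t] =
          [set C in filter (comp_of_type ^~ t) (map vset F)].
  by apply/setP => C; rewrite !inE mem_filter andbC.
rewrite cardsE (card_uniqP _) ?filter_uniq // size_filter count_map.
apply: eq_in_count => l lF /=; apply/idP/idP => [/(comp_of_typeP _ t_valid) [l' l't E]|lt].
  by rewrite (@vset_inj l l') // ?(affine_sets_canon l't) //; apply/eqP/F_canon.
by apply/(comp_of_typeP _ t_valid); exists l.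
Qed.

End Represented.

Definition signature := (nat * seq (AffType * nat))%type.

Definition valid_signature (sg : signature) := all (fun tk => aff_valid tk.1) sg.2.

Definition has_signature (sg : signature) S :=
  (#|comps S| == sg.1) && all (fun tk => ncomp S tk.1 == tk.2) sg.2.

Definition signature_codes (sg : signature) :=
  (sg.1, [seq (affine_sets tk.1, tk.2) | tk <- sg.2]).

Definition family_has_signature (sc : nat * seq (seq (seq nat) * nat)) F :=
  (size F == sc.1) && all (fun Ak => count (mem Ak.1) F == Ak.2) sc.2.

Lemma represents_signature S F sg : represents S F -> valid_signature sg ->
  has_signature sg S = family_has_signature (signature_codes sg) F.
Proof.
case: sg => k ts SF ts_valid.
rewrite /has_signature /family_has_signature /= (represents_ncomps SF) all_map; congr (_ && _).
elim: ts ts_valid => //= -[t n] ts IHts /andP [t_valid /IHts ->].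
by rewrite (represents_ncomp SF).
Qed.

Lemma represents_signatures S F sgs : represents S F -> all valid_signature sgs ->
  has (has_signature ^~ S) sgs = has (family_has_signature ^~ F) (map signature_codes sgs).
Proof.
by move=> SF; elim: sgs => //= sg sgs IHsgs /andP [/(represents_signature SF) -> /IHsgs ->].
Qed.

Definition vertex_census L := (count (gtn 10) L, count (fun k => 10 <= k < 16) L, count (leq 16) L).

Section FamilyCounting.

Variable Fs : seq (seq (seq nat)).
Hypothesis Fs_complete : forall S, parabolic S -> exists2 F, F \in Fs & represents S F.
Hypothesis Fs_sound : forall F, F \in Fs ->
  parabolic (vset (flatten F)) /\ represents (vset (flatten F)) F.

Definition family_sets (P : pred (seq (seq nat))) :=
  undup [seq canon (flatten F) | F <- Fs & P F].

Lemma parabolic_setsE (Q : pred {set V}) (P : pred (seq (seq nat))) :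
  (forall S F, represents S F -> Q S = P F) ->
  [set S | parabolic S && Q S] = [set S in map vset (family_sets P)].
Proof.
move=> QP; apply/setP => S; rewrite !inE; apply/andP/mapP => [[S_par QS]|[L]].
  have [F FP SF] := Fs_complete S_par; have [_ SE _ _] := SF.
  exists (canon (flatten F)); last by rewrite vset_canon ?(represents_lt SF).
  by rewrite mem_undup; apply: map_f; rewrite mem_filter -(QP _ _ SF) QS.
rewrite mem_undup => /mapP [F]; rewrite mem_filter => /andP [PF FP] -> ->.
have [S_par SF] := Fs_sound FP.
by rewrite vset_canon ?(represents_lt SF) // S_par -(QP _ _ SF) in PF *.
Qed.

Lemma card_parabolic_sets (Q : pred {set V}) (P : pred (seq (seq nat))) :
  (forall S F, represents S F -> Q S = P F) ->
  #|[set S | parabolic S && Q S]| = size (family_sets P).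
Proof.
move=> QP; rewrite (parabolic_setsE QP) cardsE (card_uniqP _) ?size_map //.
rewrite map_inj_in_uniq ?undup_uniq // => L1 L2 /[!mem_undup] /mapP [F1 _ ->] /mapP [F2 _ ->].
by apply: vset_inj; rewrite canon_idem.
Qed.

(* The [let]s make [vm_compute] evaluate the affine sets only once. *)
Definition class_census (sg : signature) c e f g :=
  let sc := signature_codes sg in
  let Ls := family_sets (fun F => (family_rank F == 8) && family_has_signature sc F) in
  (size Ls == c) && all (fun L => vertex_census L == (e, f, g)) Ls.

Lemma type_classP (ty : pred {set V}) sg c e f g : class_census sg c e f g ->
  valid_signature sg -> ty =1 has_signature sg -> type_class ty c e f g.
Proof.
move=> /andP [/eqP size_Ls /allP census] sg_valid tyE.
have QP S F : represents S F -> (prank S == 8) && ty S =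
    (family_rank F == 8) && family_has_signature (signature_codes sg) F.
  by move=> SF; rewrite (represents_prank SF) tyE (represents_signature SF).
split; first by rewrite (card_parabolic_sets QP).
move=> S S_par S_rk tyS.
have : S \in [set S | parabolic S && ((prank S == 8) && ty S)] by rewrite inE S_par S_rk eqxx.
rewrite (parabolic_setsE QP) inE => /mapP [L LP ->].
have [L_uniq L_lt] : uniq L /\ all (gtn 20) L.
  by move: LP; rewrite mem_undup => /mapP [F _ ->]; rewrite canon_uniq canon_lt.
have /eqP [cE cF cG] := census L LP.
split; [rewrite -cE | rewrite -cF | rewrite -cG]; apply: card_vsetI => // v.
- exact: mem_Eset.
- exact: mem_Fset.
- exact: mem_Gset.
Qed.

Definition classification_census (sgs : seq signature) :=
  let scs := map signature_codes sgs in
  all (fun F => (family_rank F == 8) ==> has (family_has_signature ^~ F) scs) Fs.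

Lemma classificationP sgs : classification_census sgs -> all valid_signature sgs ->
  forall S, parabolic S -> prank S = 8 -> has (has_signature ^~ S) sgs.
Proof.
move=> /allP census sgs_valid S /Fs_complete [F FP SF] S_rk.
have /implyP := census F FP; rewrite -(represents_prank SF) S_rk eqxx => /(_ isT).
by rewrite (represents_signatures SF).
Qed.

End FamilyCounting.

Definition sig_E7A1 : signature := (2, [:: (tE 7, 1); (tA 1, 1)]).
Definition sig_E6A2 : signature := (2, [:: (tE 6, 1); (tA 2, 1)]).
Definition sig_D6A1A1 : signature := (3, [:: (tD 6, 1); (tA 1, 2)]).
Definition sig_A7A1 : signature := (2, [:: (tA 7, 1); (tA 1, 1)]).
Definition sig_A5A2A1 : signature := (3, [:: (tA 5, 1); (tA 2, 1); (tA 1, 1)]).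

Lemma families_rank_le8 : all (fun F => family_rank F <= 8) parabolic_families.
Proof. by vm_compute. Qed.

Lemma size_families_rank8 :
  size (family_sets parabolic_families (fun F => family_rank F == 8)) = 29.
Proof. by vm_compute. Qed.

Lemma families_classified : classification_census parabolic_families
  [:: sig_E7A1; sig_E6A2; sig_D6A1A1; sig_A7A1; sig_A5A2A1].
Proof. by vm_compute. Qed.

Lemma classes_census : [&& class_census parabolic_families sig_E7A1 12 8 1 1,
  class_census parabolic_families sig_E6A2 4 7 3 0,
  class_census parabolic_families sig_D6A1A1 6 8 1 2,
  class_census parabolic_families sig_A7A1 3 8 2 0 &
  class_census parabolic_families sig_A5A2A1 4 7 3 1].
Proof. by vm_compute. Qed.

Theorem lemma3p2 :
  (forall S : {set V}, parabolic S -> prank S <= 8) /\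
  #|[set S : {set V} | parabolic S && (prank S == 8)]| = 29 /\
  (forall S : {set V}, parabolic S -> prank S = 8 ->
     [|| type_E7A1 S, type_E6A2 S, type_D6A1A1 S, type_A7A1 S | type_A5A2A1 S]) /\
  type_class type_E7A1 12 8 1 1 /\
  type_class type_E6A2 4 7 3 0 /\
  type_class type_D6A1A1 6 8 1 2 /\
  type_class type_A7A1 3 8 2 0 /\
  type_class type_A5A2A1 4 7 3 1.
Proof.
have complete := parabolic_represented; have sound := families_represented.
have rank8 S F : represents S F -> (prank S == 8) = (family_rank F == 8).
  by move=> SF; rewrite (represents_prank SF).
have [cE7A1 cE6A2 cD6A1A1 cA7A1 cA5A2A1] := and5P classes_census.
split.
  move=> S /complete [F FP SF]; rewrite (represents_prank SF).
  exact: (allP families_rank_le8).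
split; first by rewrite (card_parabolic_sets complete sound rank8) size_families_rank8.
split.
  move=> S S_par S_rk; have := classificationP complete families_classified isT S_par S_rk.
  by rewrite /= /has_signature /= !andbT orbF.
split.
  by apply: (type_classP complete sound cE7A1 isT) => S; rewrite /has_signature /= andbT.
split.
  by apply: (type_classP complete sound cE6A2 isT) => S; rewrite /has_signature /= andbT.
split.
  by apply: (type_classP complete sound cD6A1A1 isT) => S; rewrite /has_signature /= andbT.
split.
  by apply: (type_classP complete sound cA7A1 isT) => S; rewrite /has_signature /= andbT.
by apply: (type_classP complete sound cA5A2A1 isT) => S; rewrite /has_signature /= andbT.
Qed.
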